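(* Let $a$ be a positive integer, let $G$ be a finite simple graph of arboricity at most $a$ containing no isolated edges, and let $\mathcal{G}\cong\mathcal{G}_1\times\mathcal{G}_2\times\cdots\times\mathcal{G}_a$ be an Abelian group that is a product of Abelian groups $\mathcal{G}_i$ with $|\mathcal{G}_i|\geq 4$ for $i=1,\ldots,a$. Then there exists a labeling $f\colon E(G)\to\mathcal{G}\setminus\{0\}$ such that $w_f(u)\neq w_f(v)$ for every edge $uv$ of $G$.
   Context: The arboricity of $G$ is the least number of forests into which $E(G)$ can be decomposed. An isolated edge is a connected component isomorphic to $K_2$. $w_f(v)=\sum_{u\in N(v)}f(uv)$, the sum in $\mathcal{G}$. *)

From HB Require Import structures.
From mathcomp Require Import all_boot all_order all_algebra.
Set Implicit Arguments. Unset Strict Implicit. Unset Printing Implicit Defensive.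
Import GRing.Theory.
Local Open Scope ring_scope.

(* A finite simple graph: vertex type T : finType, adjacency e : rel T,
   symmetric and irreflexive.  An edge uv is represented by the 2-set [set u; v]. *)
Definition simple_graph (T : finType) (e : rel T) : Prop :=
  symmetric e /\ irreflexive e.

Definition edge_of (T : finType) (u v : T) : {set T} := [set u; v].

Definition nbhd (T : finType) (e : rel T) (v : T) : {set T} := [set u | e v u].

Definition acyclic (T : finType) (r : rel T) : Prop :=
  forall s : seq T, uniq s -> (3 <= size s)%N -> ~~ cycle r s.

(* Arboricity at most a: E(G) can be decomposed into a forests, i.e. there
   is an assignment of each edge to one of a classes, each class acyclic. *)
Definition arboricity_le (T : finType) (e : rel T) (a : nat) : Prop :=
  exists c : {set T} -> 'I_a,
    forall i : 'I_a, acyclic (fun x y => e x y && (c (edge_of x y) == i)).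

(* No connected component is isomorphic to K_2: there is no edge uv with
   both endpoints of degree 1. *)
Definition no_isolated_edge (T : finType) (e : rel T) : Prop :=
  forall u v, e u v -> ~ (#|nbhd e u| = 1%N /\ #|nbhd e v| = 1%N).

Definition weight (T : finType) (e : rel T) (G : zmodType)
  (f : {set T} -> G) (v : T) : G :=
  \sum_(u in nbhd e v) f (edge_of u v).

Definition card_ge4 (A : eqType) : Prop :=
  exists s : seq A, uniq s /\ (4 <= size s)%N.

Definition iso_to_product (G : zmodType) (a : nat) (Gi : 'I_a -> zmodType)
  (phi : G -> forall i, Gi i) : Prop :=
  (forall x y i, phi (x + y) i = phi x i + phi y i) /\
  (forall x y, phi x = phi y -> x = y) /\
  (forall g : forall i, Gi i, exists x, phi x = g).

From HB Require Import structures.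
From mathcomp Require Import all_boot all_order all_algebra.
From mathcomp Require Import zify.
Import GRing.Theory.
Local Open Scope ring_scope.
Set Implicit Arguments. Unset Strict Implicit. Unset Printing Implicit Defensive.

(* Let F_1, ..., F_a be the forests of an arboricity decomposition.  Inside G each F_i
   grows into a forest H_i without isolated edges: an isolated edge ab of H_i is not a
   component of G, so one endpoint, say a, has a further G-neighbour w, and the edge aw
   joins two components of H_i.
   Every forest has a labeling by nonzero elements of an abelian group of order at
   least 4 whose weights differ along every edge that is not an isolated edge.  By
   induction: the second vertex p of a longest path has, apart from at most one
   neighbour q, only leaves as neighbours; label the forest without these leaves, then
   label the pendant edges at p so that each new weight avoids at most three values.
   Finally label uv by the element of G whose i-th coordinate is the H_i-label of uv
   (0 if uv is not in H_i): if uv lies in F_i, the weights of u and v differ in the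
   i-th coordinate. *)

Lemma measure_ascent (A : Type) (m : A -> nat) (b : nat) (P Q : A -> Prop) (x0 : A) :
  (forall x, P x -> (m x <= b)%N) -> P x0 ->
  (forall x, P x -> Q x \/ exists2 y, P y & (m x < m y)%N) ->
  exists x, P x /\ Q x.
Proof.
move=> bounded Px0 grow; move En : (b - m x0)%N => n.
elim/ltn_ind: n x0 Px0 En => n IH x Px En.
have [Qx|[y Py mxy]] := grow x Px; first by exists x.
by apply: (IH (b - m y)%N _ y Py) => //; have := bounded y Py; lia.
Qed.

Lemma card_ge4_avoid3 (A : eqType) : card_ge4 A ->
  forall a b c : A, exists x, [/\ x != a, x != b & x != c].
Proof.
move=> [s [us hs]] a b c.
have [/allP sub | ] := boolP (all (mem [:: a; b; c]) s).
  by have := leq_trans hs (uniq_leq_size us sub).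
rewrite -has_predC => /hasP [x _]; rewrite /= !inE !negb_or => /and3P [xa xb xc].
by exists x.
Qed.

Section StarLabeling.
Variable Gm : zmodType.
Hypothesis Gm4 : card_ge4 Gm.

Lemma exists_nonzero_shift (m : nat) (y : Gm) : y != 0 ->
  exists2 t : Gm, t != 0 & y + t *+ m != 0.
Proof.
move=> y0; have [t1 [t10 _ _]] := card_ge4_avoid3 Gm4 0 0 0.
have [t2 [t20 t21 _]] := card_ge4_avoid3 Gm4 0 t1 0.
have [E1|] := eqVneq (y + t1 *+ m) 0; last by exists t1.
have [E2|] := eqVneq (y + t2 *+ m) 0; last by exists t2.
(* If both t1 and t2 fail, then y + (t1 - t2) *+ m = y. *)
exists (t1 - t2); first by rewrite subr_eq0 eq_sym.
have -> : y + (t1 - t2) *+ m = (y + t1 *+ m) - (y + t2 *+ m) + y.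
  by rewrite mulrnBl [y + t1 *+ m]addrC addrKA addrC.
by rewrite E1 E2 subrr add0r.
Qed.

Lemma star_labeling (I : finType) (L : {set I}) (y X : Gm) : y != 0 -> L != set0 ->
  exists g : I -> Gm, [/\ {in L, forall l, g l != 0},
     y + \sum_(l in L) g l != X &
     {in L, forall l, y + \sum_(l' in L) g l' != g l}].
Proof.
move=> y0 /set0Pn [l0 l0L].
have [t t0 R0] := exists_nonzero_shift #|L|.-1 y0.
set R := y + t *+ #|L|.-1 in R0.
have [S [SX St SR]] := card_ge4_avoid3 Gm4 X t R.
(* Label l0 by S - R and every other l by t, so that y plus the total is S. *)
exists (fun l => if l == l0 then S - R else t).
have -> : y + \sum_(l in L) (if l == l0 then S - R else t) = S.
  rewrite (bigD1 l0) //= eqxx (eq_bigr (fun _ => t)); last first.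
    by move=> l /andP [_ /negbTE ->].
  rewrite sumr_const.
  have -> : #|[pred l | (l \in L) && (l != l0)]| = #|L|.-1.
    by rewrite (cardD1 l0 L) l0L; apply: eq_card => l; rewrite !inE andbC.
  by rewrite /R addrCA subrK.
split=> // l _; case: ifP => _ //; first by rewrite subr_eq0.
by rewrite -subr_eq0 opprB addrC subrK.
Qed.
End StarLabeling.

Section Graphs.
Variable T : finType.
Implicit Types (H : rel T) (x y z u v p q l : T) (s : seq T) (L : {set T}).

Definition isolated_edge H u v : Prop := #|nbhd H u| = 1%N /\ #|nbhd H v| = 1%N.

Definition arcs H : {set T * T} := [set x | H x.1 x.2].

Definition upath H x s := uniq (x :: s) && path H x s.

Definition longest_upath H x s :=
  upath H x s /\ forall x' s', upath H x' s' -> (size s' <= size s)%N.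

Lemma edge_ofC x y : edge_of x y = edge_of y x.
Proof. by rewrite /edge_of setUC. Qed.

Lemma nbhd_card1 H x y : H x y -> #|nbhd H x| = 1%N -> nbhd H x = [set y].
Proof.
move=> Hxy /eqP /cards1P [z Nx].
have : y \in nbhd H x by rewrite inE.
by rewrite Nx inE => /eqP ->.
Qed.

Lemma sub_acyclic H H' : subrel H' H -> acyclic H -> acyclic H'.
Proof.
move=> sub ac s us hs; apply: contraNN (ac s us hs); exact: sub_cycle.
Qed.

Lemma cycle_two_neighbours H s x : uniq s -> (3 <= size s)%N -> cycle H s -> x \in s ->
  exists y z, [/\ y != z, H x y, H z x, y \in s & z \in s].
Proof.
move=> us hs cs xs; case: (rot_to xs) => i s' E.
have us' : uniq (x :: s') by rewrite -E rot_uniq.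
have cs' : cycle H (x :: s') by rewrite -E rot_cycle.
have ms z : z \in x :: s' -> z \in s by rewrite -E mem_rot.
have hs' : (3 <= size (x :: s'))%N by rewrite -E size_rot.
case: s' E us' cs' ms hs' => [|y [|c s3]] //= E us' cs' ms hs'.
move: cs'; rewrite /cycle rcons_path => /and4P [Hxy _ _ Hzx].
exists y, (last c s3); split => //.
- by apply: contraTneq us' => ->; rewrite mem_last !andbF.
- by apply: ms; rewrite !inE eqxx orbT.
- by apply: ms; rewrite !inE; move: (mem_last c s3); rewrite inE => ->; rewrite !orbT.
Qed.

Lemma acyclic_upath_start H x y s z : acyclic H -> upath H x (y :: s) -> z \in s ->
  ~~ H z x.
Proof.
move=> ac /andP [us ps] zs; case/splitPr: zs us ps => s1 s2 us ps.
apply: (contraNN _ (ac (x :: y :: rcons s1 z) _ _)) => [Hzx||].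
- rewrite /cycle rcons_path /= last_rcons Hzx andbT.
  by move: ps; rewrite -cat_rcons -cat_cons cat_path => /andP [].
- by move: us; rewrite -cat_rcons -!cat_cons cat_uniq => /andP [].
- by rewrite /= size_rcons.
Qed.

Lemma upath_cons H x y s :
  upath H x (y :: s) = [&& x \notin y :: s, H x y & upath H y s].
Proof.
by rewrite /upath /= -!andbA; congr (_ && _); case: (H x y); rewrite /= ?andbF.
Qed.

Lemma exists_longest_upath H u v : irreflexive H -> H u v ->
  exists x s, longest_upath H x s /\ (0 < size s)%N.
Proof.
move=> irr Huv.
pose P n := [exists x, exists t : n.-tuple T, upath H x t].
have uv : upath H u [:: v].
  by rewrite /upath /= Huv inE !andbT; apply: contraTneq Huv => ->; rewrite irr.
have P1 : P 1%N by apply/existsP; exists u; apply/existsP; exists [tuple v].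
have bounded n : P n -> (n <= #|T|)%N.
  move=> /existsP [x /existsP [t /andP [ut _]]].
  by have := max_card (mem (x :: t)); rewrite (card_uniqP ut) /= size_tuple; apply: ltnW.
case: (ex_maxnP (ex_intro P 1%N P1) bounded) => n /existsP [x /existsP [t xt]] mx.
exists x, t; rewrite size_tuple; split; last by apply: mx.
split=> // x' s' x's'; rewrite size_tuple; apply: mx.
by apply/existsP; exists x'; apply/existsP; exists (in_tuple s').
Qed.

Section Forest.
Variable H : rel T.
Hypotheses (Hsym : symmetric H) (Hirr : irreflexive H) (Hac : acyclic H).

Lemma longest_upath_start x y s : longest_upath H x (y :: s) -> nbhd H x = [set y].
Proof.
move=> [xys mx]; have /andP [uxys /andP [Hxy _]] := xys.
apply/setP => z; rewrite !inE; apply/idP/eqP => [Hxz|-> //].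
have [zin|zout] := boolP (z \in x :: y :: s).
  move: zin; rewrite !inE => /or3P [/eqP zx|/eqP //|zs].
    by move: Hxz; rewrite zx Hirr.
  by move: (acyclic_upath_start Hac xys zs); rewrite Hsym Hxz.
suff /mx : upath H z (x :: y :: s) by rewrite /= ltnn.
by rewrite /upath cons_uniq zout [path H z _]/= Hsym Hxz.
Qed.

(* p is the second vertex of a longest path. *)
Lemma forest_pendant u v : H u v ->
  (exists l p, nbhd H l = [set p] /\ nbhd H p = [set l]) \/
  (exists p q l0, [/\ H p q, H p l0, l0 != q &
     forall l, H p l -> l != q -> nbhd H l = [set p]]).
Proof.
move=> Huv; have [x [[|p s] [[xps mx] //] _]] := exists_longest_upath Hirr Huv.
have Nx := longest_upath_start (conj xps mx).
case: s xps mx Nx => [|q s] xps mx Nx.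
  left; exists x, p; split => //; apply: (longest_upath_start (s := [::])).
  by split=> //; move: xps; rewrite /upath /= !inE Hsym eq_sym.
move: (xps); rewrite upath_cons => /and3P [xpqs Hxp pqs].
right; exists p, q, x; split.
- by move: pqs; rewrite upath_cons => /and3P [].
- by rewrite Hsym.
- by apply: contraNneq xpqs => ->; rewrite !inE eqxx orbT.
move=> l Hpl lq; apply: (longest_upath_start (s := q :: s)); split=> //.
rewrite upath_cons Hsym Hpl pqs !andbT !inE !negb_or lq /=; apply/andP; split.
  by apply: contraTneq Hpl => ->; rewrite Hirr.
by apply: contraTN Hpl => ls; rewrite -Hsym (negbTE (acyclic_upath_start Hac pqs ls)).
Qed.

End Forest.

Definition del_vertices H (L : {set T}) : rel T :=
  fun x y => [&& H x y, x \notin L & y \notin L].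

Lemma del_vertices_sub H L : subrel (del_vertices H L) H.
Proof. by move=> x y /andP []. Qed.

Lemma del_vertices_sym H L : symmetric H -> symmetric (del_vertices H L).
Proof. by move=> Hsym x y; rewrite /del_vertices Hsym; congr (_ && _); rewrite andbC. Qed.

Lemma arcs_del_vertices H L l z : l \in L -> H l z ->
  (#|arcs (del_vertices H L)| < #|arcs H|)%N.
Proof.
move=> lL Hlz; apply: proper_card; apply/properP; split.
  by apply/subsetP => -[x y]; rewrite !inE => /del_vertices_sub.
by exists (l, z); rewrite !inE //= /del_vertices lL andbF.
Qed.

Section Labelings.
Variable Gm : zmodType.
Implicit Types (h : {set T} -> Gm) (g : T -> Gm).

Definition nonzero_on H h := forall u v, H u v -> h (edge_of u v) != 0.

Definition weakly_distinguishing H h := nonzero_on H h /\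
  forall u v, H u v -> ~ isolated_edge H u v -> weight H h u != weight H h v.

Definition distinguishing H h := nonzero_on H h /\
  forall u v, H u v -> weight H h u != weight H h v.

Definition extend_labeling (L : {set T}) g h : {set T} -> Gm :=
  fun E => if [pick l in L | l \in E] is Some l then g l else h E.

Lemma extend_labeling_off L g h u v : u \notin L -> v \notin L ->
  extend_labeling L g h (edge_of u v) = h (edge_of u v).
Proof.
move=> uL vL; rewrite /extend_labeling; case: pickP => [l /andP [lL]|//].
by rewrite !inE => /orP [] /eqP El; [move: uL | move: vL]; rewrite -El lL.
Qed.

Lemma extend_labeling_on L g h p l : p \notin L -> l \in L ->
  extend_labeling L g h (edge_of p l) = g l.
Proof.
move=> pL lL; rewrite /extend_labeling; case: pickP => [l' /andP [l'L]|/(_ l)].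
  by rewrite !inE => /orP [/eqP El|/eqP ->] //; move: pL; rewrite -El l'L.
by rewrite lL !inE eqxx orbT.
Qed.

Section Leaves.
Variables (H : rel T) (p : T) (L : {set T}).
Hypotheses (Hsym : symmetric H) (Hirr : irreflexive H) (pL : p \notin L).
Hypothesis leafL : {in L, forall l, nbhd H l = [set p]}.

Lemma leaf_nbr l z : l \in L -> H l z -> z = p.
Proof. by move=> lL Hlz; apply/set1P; rewrite -(leafL lL) inE. Qed.

Lemma nbhd_del_vertices x : x \notin L -> x != p -> nbhd (del_vertices H L) x = nbhd H x.
Proof.
move=> xL xp; apply/setP => z; rewrite !inE /del_vertices xL /=.
case Hxz: (H x z) => //=; apply: contraNN xp => zL.
by apply/eqP; apply: (leaf_nbr zL); rewrite Hsym.
Qed.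

Lemma weight_extend_off g h x : x \notin L -> x != p ->
  weight H (extend_labeling L g h) x = weight (del_vertices H L) h x.
Proof.
move=> xL xp; rewrite /weight nbhd_del_vertices //; apply: eq_bigr => z.
by rewrite -(nbhd_del_vertices xL xp) inE => /and3P [_ _ zL]; rewrite extend_labeling_off.
Qed.

Lemma weight_extend_leaf g h l : l \in L -> weight H (extend_labeling L g h) l = g l.
Proof. by move=> lL; rewrite /weight leafL // big_set1 extend_labeling_on. Qed.

Lemma weakly_distinguishing_extend g h :
  weakly_distinguishing (del_vertices H L) h -> {in L, forall l, g l != 0} ->
  {in L, forall l, ~ isolated_edge H p l ->
     weight H (extend_labeling L g h) p != g l} ->
  (forall y, y \notin L -> H p y ->
     weight H (extend_labeling L g h) p != weight (del_vertices H L) h y) ->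
  weakly_distinguishing H (extend_labeling L g h).
Proof.
move=> [h0 hw] g0 leaf_ok center_ok.
have leaf_label x y : H x y -> x \in L -> extend_labeling L g h (edge_of x y) = g x.
  by move=> Hxy xL; rewrite (leaf_nbr xL Hxy) edge_ofC extend_labeling_on.
have kept x y : H x y -> x \notin L -> y \notin L -> del_vertices H L x y.
  by move=> Hxy xL yL; rewrite /del_vertices Hxy xL yL.
split=> x y Hxy.
  have [xL|xL] := boolP (x \in L); first by rewrite leaf_label ?g0.
  have [yL|yL] := boolP (y \in L); first by rewrite edge_ofC leaf_label ?g0 // Hsym.
  by rewrite extend_labeling_off // h0 // kept.
have star_edge x' y' : H x' y' -> ~ isolated_edge H x' y' -> (x' \in L) || (x' == p) ->
    weight H (extend_labeling L g h) x' != weight H (extend_labeling L g h) y'.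
  move=> Hxy' iso /orP [xL|/eqP xp].
    have yp := leaf_nbr xL Hxy'; subst y'.
    rewrite weight_extend_leaf // eq_sym; apply: leaf_ok xL _ => -[? ?].
    by apply: iso; split.
  subst x'; have [yL|yL] := boolP (y' \in L).
    by rewrite (weight_extend_leaf _ _ yL); apply: leaf_ok.
  rewrite (weight_extend_off _ _ yL) ?center_ok //.
  by apply: contraTneq Hxy' => ->; rewrite Hirr.
move=> iso; have [xLp|] := boolP ((x \in L) || (x == p)); first exact: star_edge.
have [yLp _|] := boolP ((y \in L) || (y == p)).
  rewrite eq_sym; apply: star_edge => //; first by rewrite Hsym.
  by move=> -[? ?]; apply: iso.
rewrite !negb_or => /andP [yL yp] /andP [xL xp].
rewrite !weight_extend_off //; apply: hw; first exact: kept.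
by rewrite /isolated_edge !nbhd_del_vertices.
Qed.

End Leaves.

Section ForestLabeling.
Hypothesis Gm4 : card_ge4 Gm.

Lemma weakly_distinguishing_K2 H l p h : symmetric H -> irreflexive H ->
  nbhd H l = [set p] -> nbhd H p = [set l] ->
  weakly_distinguishing (del_vertices H [set l]) h ->
  exists h', weakly_distinguishing H h'.
Proof.
move=> Hsym Hirr Nl Np hw.
have Hpl : H p l by have := set11 l; rewrite -Np inE.
have pl : p \notin [set l] by rewrite inE; apply: contraTneq Hpl => ->; rewrite Hirr.
have [t [t0 _ _]] := card_ge4_avoid3 Gm4 0 0 0.
exists (extend_labeling [set l] (fun _ => t) h).
apply: (weakly_distinguishing_extend (p := p)) => //.
all: try by move=> l' /set1P ->.
- by move=> l' /set1P -> []; rewrite /isolated_edge Nl Np !cards1.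
- move=> y yl Hpy; have : y \in nbhd H p by rewrite inE.
  by rewrite Np (negbTE yl).
Qed.

Lemma weakly_distinguishing_star H p q h : symmetric H -> irreflexive H -> H p q ->
  nbhd H p :\ q != set0 -> {in nbhd H p :\ q, forall l, nbhd H l = [set p]} ->
  weakly_distinguishing (del_vertices H (nbhd H p :\ q)) h ->
  exists h', weakly_distinguishing H h'.
Proof.
set L := nbhd H p :\ q => Hsym Hirr Hpq L0 leafL [h0 hw].
have pL : p \notin L by rewrite !inE Hirr andbF.
have qL : q \notin L by rewrite !inE eqxx.
have Hpq' : del_vertices H L p q by rewrite /del_vertices Hpq pL qL.
have [g [g0 gq gl]] :=
  star_labeling Gm4 (weight (del_vertices H L) h q) (h0 _ _ Hpq') L0.
have Np : nbhd H p = q |: L by rewrite setD1K // inE.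
have wp : weight H (extend_labeling L g h) p = h (edge_of p q) + \sum_(l in L) g l.
  rewrite /weight Np big_setU1 //= extend_labeling_off // [edge_of q p]edge_ofC.
  by congr (_ + _); apply: eq_bigr => l lL; rewrite edge_ofC extend_labeling_on.
exists (extend_labeling L g h); apply: (weakly_distinguishing_extend (p := p)) => //.
- by move=> l lL _; rewrite wp gl.
move=> y yL Hpy; have : y \in nbhd H p by rewrite inE.
by rewrite Np in_setU1 (negbTE yL) orbF => /eqP ->; rewrite wp.
Qed.

Lemma forest_weakly_distinguishing H : symmetric H -> irreflexive H -> acyclic H ->
  exists h, weakly_distinguishing H h.
Proof.
move Hn : #|arcs H| => n; elim/ltn_ind: n H Hn => n IH H Hn Hsym Hirr Hac.
have IHdel L l z : l \in L -> H l z ->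
    exists h, weakly_distinguishing (del_vertices H L) h.
  move=> lL Hlz; apply: (IH _ _ _ erefl).
  - by rewrite -Hn; apply: arcs_del_vertices lL Hlz.
  - exact: del_vertices_sym.
  - by move=> x; apply/negP => /del_vertices_sub; rewrite Hirr.
  - exact: sub_acyclic (@del_vertices_sub H L) Hac.
have [[u v] /= Huv|noE] := pickP (fun x : T * T => H x.1 x.2); last first.
  by exists (fun _ => 0); split=> u v Huv; have := noE (u, v); rewrite /= Huv.
case: (forest_pendant Hsym Hirr Hac Huv) =>
  [[l [p [Nl Np]]]|[p [q [l0 [Hpq Hpl0 l0q leaves]]]]].
  have Hlp : H l p by have := set11 p; rewrite -Nl inE.
  have [h hw] := IHdel [set l] l p (set11 l) Hlp.
  exact: weakly_distinguishing_K2 Nl Np hw.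
have l0L : l0 \in nbhd H p :\ q by rewrite !inE l0q.
have Hl0p : H l0 p by rewrite Hsym.
have [h hw] := IHdel _ l0 p l0L Hl0p.
apply: weakly_distinguishing_star Hpq _ _ hw => //; first by apply/set0Pn; exists l0.
by move=> l; rewrite !inE => /andP [lq Hpl]; apply: leaves.
Qed.

End ForestLabeling.

Definition restrict_labeling H h : {set T} -> Gm :=
  fun E => if [exists x in E, exists y in E, H x y] then h E else 0.

Lemma restrict_labeling_edge H h u v : symmetric H -> irreflexive H ->
  restrict_labeling H h (edge_of u v) = if H u v then h (edge_of u v) else 0.
Proof.
move=> Hsym Hirr; rewrite /restrict_labeling; congr (if _ then _ else _).
apply/existsP/idP => [[x /andP [xE /existsP [y /andP [yE Hxy]]]]|Huv].
  move: xE yE Hxy; rewrite !inE => /orP [] /eqP -> /orP [] /eqP ->;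
  by rewrite ?Hirr // Hsym.
by exists u; rewrite !inE eqxx /=; apply/existsP; exists v; rewrite !inE eqxx orbT.
Qed.

Lemma weight_restrict_labeling e H h v : symmetric H -> irreflexive H -> subrel H e ->
  weight e (restrict_labeling H h) v = weight H h v.
Proof.
move=> Hsym Hirr He; rewrite /weight.
under eq_bigr => u _ do rewrite restrict_labeling_edge //.
rewrite -big_mkcondr; apply: eq_bigl => u; rewrite !inE Hsym.
by case Hvu: (H v u); rewrite ?andbF ?andbT // He.
Qed.

End Labelings.

Definition add_edge H a w : rel T :=
  fun x y => [|| H x y, (x == a) && (y == w) | (x == w) && (y == a)].

Lemma add_edge_sym H a w : symmetric H -> symmetric (add_edge H a w).
Proof.
move=> Hsym x y; rewrite /add_edge Hsym; congr (_ || _).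
by rewrite orbC andbC [(y == w) && _]andbC.
Qed.

Lemma arcs_add_edge H a w : ~~ H a w -> (#|arcs H| < #|arcs (add_edge H a w)|)%N.
Proof.
move=> Haw; apply: proper_card; apply/properP; split.
  by apply/subsetP => -[x y]; rewrite !inE /add_edge /= => ->.
by exists (a, w); rewrite !inE /add_edge /= ?eqxx ?orbT.
Qed.

(* On a cycle, b would have a single neighbour, and then so would a. *)
Lemma acyclic_add_edge H a b w : symmetric H -> acyclic H ->
  nbhd H a = [set b] -> nbhd H b = [set a] -> a != b -> w != a -> w != b ->
  acyclic (add_edge H a w).
Proof.
move=> Hsym Hac Na Nb ab wa wb s us hs; apply/negP => cs.
have Ha z : H a z = (z == b) by rewrite -in_set1 -Na inE.
have Hb z : H b z = (z == a) by rewrite -in_set1 -Nb inE.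
have bs : b \notin s.
  apply/negP => bs; have [c [d [cd]]] := cycle_two_neighbours us hs cs bs.
  rewrite /add_edge [H d b]Hsym !Hb (eq_sym b a) (negbTE ab) (eq_sym b w) (negbTE wb).
  by rewrite !andbF !orbF => /eqP Ec /eqP Ed; rewrite Ec Ed eqxx in cd.
have as_ : a \notin s.
  apply/negP => as_; have [c [d [cd]]] := cycle_two_neighbours us hs cs as_.
  rewrite /add_edge [H d a]Hsym !Ha eqxx (eq_sym a w) (negbTE wa) !andbF !orbF andbT.
  have notb z : z \in s -> (z == b) = false by move=> zs; apply: contraNF bs => /eqP <-.
  move=> + + cs' ds'; rewrite (notb c cs') (notb d ds') => /eqP Ec /eqP Ed.
  by rewrite Ec Ed eqxx in cd.
have sameH : {in s &, add_edge H a w =2 H}.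
  move=> x y xs ys; rewrite /add_edge.
  have [Ex|xa] := eqVneq x a; first by move: as_; rewrite -Ex xs.
  have [Ey|ya] := eqVneq y a; first by move: as_; rewrite -Ey ys.
  by rewrite !andbF !orbF.
by move: (Hac s us hs); rewrite -(@eq_in_cycle _ (mem s) _ _ sameH) ?cs //; apply/allP.
Qed.

Definition forest_between (F e H : rel T) :=
  [/\ symmetric H, subrel F H, subrel H e & acyclic H].

Section Extension.
Variables (e F : rel T).
Hypotheses (esym : symmetric e) (eirr : irreflexive e) (noiso : no_isolated_edge e).

Lemma forest_between_grow H : forest_between F e H ->
  (forall u v, H u v -> ~ isolated_edge H u v) \/
  exists2 H', forest_between F e H' & (#|arcs H| < #|arcs H'|)%N.
Proof.
move=> [Hsym FH He Hac].
have [|noK2] := boolP [exists u, exists v,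
    [&& H u v, #|nbhd H u| == 1%N & #|nbhd H v| == 1%N]]; last first.
  left=> u v Huv [du dv]; move/negP: noK2; apply.
  by apply/existsP; exists u; apply/existsP; exists v; rewrite Huv du dv !eqxx.
case/existsP=> u /existsP [v /and3P [Huv /eqP du /eqP dv]]; right.
have grow a b : H a b -> #|nbhd H a| = 1%N -> #|nbhd H b| = 1%N ->
    #|nbhd e a| != 1%N -> exists2 H', forest_between F e H' & (#|arcs H| < #|arcs H'|)%N.
  move=> Hab da db dea.
  have Na := nbhd_card1 Hab da; have Nb := nbhd_card1 (etrans (Hsym b a) Hab) db.
  have [w /andP [eaw wb]] : exists w, e a w && (w != b).
    apply/existsP; apply: contraNT dea => /existsPn no; apply/eqP.
    suff -> : nbhd e a = [set b] by rewrite cards1.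
    apply/setP => z; rewrite !inE.
    apply/idP/eqP => [eaz|->]; last exact: He.
    by apply/eqP; move: (no z); rewrite eaz /= negbK.
  exists (add_edge H a w); last first.
    by apply: arcs_add_edge; apply: contraNN wb => Haw; rewrite -in_set1 -Na inE.
  split.
  - exact: add_edge_sym.
  - by move=> x y /FH Hxy; rewrite /add_edge Hxy.
  - by move=> x y /or3P [/He //|/andP [/eqP -> /eqP ->] //|/andP [/eqP -> /eqP ->]];
      rewrite esym.
  apply: acyclic_add_edge Na Nb _ _ wb => //.
    by apply: contraTneq (He _ _ Hab) => ->; rewrite eirr.
  by apply: contraTneq eaw => ->; rewrite eirr.
have [deu|deu] := eqVneq #|nbhd e u| 1%N; last exact: grow Huv du dv deu.
apply: (grow v u) => //; first by rewrite Hsym.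
by apply/eqP => dev; apply: (noiso (He _ _ Huv)).
Qed.

Lemma exists_forest_between_no_isolated : symmetric F -> subrel F e -> acyclic F ->
  exists H, forest_between F e H /\ forall u v, H u v -> ~ isolated_edge H u v.
Proof.
move=> Fsym Fe Fac.
apply: (@measure_ascent _ (fun H => #|arcs H|) #|[set: T * T]| _ _ F).
- by move=> H _; apply/subset_leq_card/subsetT.
- by split.
- exact: forest_between_grow.
Qed.

Lemma forest_between_distinguishing (Gm : zmodType) : card_ge4 Gm ->
  symmetric F -> subrel F e -> acyclic F ->
  exists H, forest_between F e H /\ exists h : {set T} -> Gm, distinguishing H h.
Proof.
move=> Gm4 Fsym Fe Fac.
have [H [[Hsym FH He Hac] noisoH]] := exists_forest_between_no_isolated Fsym Fe Fac.
have Hirr : irreflexive H by move=> x; apply/negP => /He; rewrite eirr.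
have [h [h0 hw]] := forest_weakly_distinguishing Gm4 Hsym Hirr Hac.
by exists H; split=> //; exists h; split=> // u v Huv; apply: hw Huv (noisoH u v Huv).
Qed.

End Extension.
End Graphs.

Section ProductProjection.
Variables (G : zmodType) (I : finType) (Gi : I -> zmodType) (phi : G -> forall i, Gi i).
Hypothesis phiD : forall x y i, phi (x + y) i = phi x i + phi y i.

Lemma proj0 i : phi 0 i = 0.
Proof. by apply: (@addrI _ (phi 0 i)); rewrite -phiD !addr0. Qed.

Lemma proj_weight (T : finType) (e : rel T) (f : {set T} -> G) i v :
  phi (weight e f v) i = weight e (fun E => phi (f E) i) v.
Proof. by rewrite /weight (big_morph (phi^~ i) (fun x y => phiD x y i) (proj0 i)). Qed.

Lemma distinguishing_product (T : finType) (e : rel T) (H : I -> rel T)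
    (h : forall i, {set T} -> Gi i) :
  (forall g : forall i, Gi i, exists x, phi x = g) -> irreflexive e ->
  (forall i, [/\ symmetric (H i), subrel (H i) e & distinguishing (H i) (h i)]) ->
  (forall u v, e u v -> exists i, H i u v) ->
  exists f : {set T} -> G, distinguishing e f.
Proof.
move=> phiS eirr Hh cover.
have [f phi_f] := fin_all_exists (fun E => phiS (fun i => restrict_labeling (H i) (h i) E)).
have phi_fE E i : phi (f E) i = restrict_labeling (H i) (h i) E by rewrite phi_f.
have Hirr i : irreflexive (H i).
  by have [_ He _] := Hh i; move=> x; apply/negP => /He; rewrite eirr.
have phi_weight i v : phi (weight e f v) i = weight (H i) (h i) v.
  have [Hsym He _] := Hh i.
  rewrite proj_weight -(weight_restrict_labeling (h i) v Hsym (Hirr i) He).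
  by apply: eq_bigr => u _; rewrite phi_fE.
exists f; split=> u v euv; have [i Huv] := cover u v euv; have [Hsym _ [h0 hw]] := Hh i.
  apply: contraNneq (h0 u v Huv) => f0.
  by have := phi_fE (edge_of u v) i; rewrite f0 proj0 restrict_labeling_edge // Huv => <-.
by apply: contraNneq (hw u v Huv) => wuv; rewrite -!phi_weight wuv.
Qed.

End ProductProjection.

Theorem corollary5 (a : nat) (T : finType) (e : rel T)
  (G : zmodType) (Gi : 'I_a -> zmodType) (phi : G -> forall i, Gi i) :
  (0 < a)%N ->
  simple_graph e ->
  arboricity_le e a ->
  no_isolated_edge e ->
  iso_to_product phi ->
  (forall i, card_ge4 (Gi i)) ->
  exists f : {set T} -> G,
    (forall u v, e u v -> f (edge_of u v) != 0) /\
    (forall u v, e u v -> weight e f u != weight e f v).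
Proof.
move=> _ [esym eirr] [c forest_c] noiso [phiD [_ phiS]] Gi4.
pose F i x y := e x y && (c (edge_of x y) == i).
have cover i : exists H, forest_between (F i) e H /\
    exists h : {set T} -> Gi i, distinguishing H h.
  apply: forest_between_distinguishing => //; last exact: forest_c.
    by move=> x y; rewrite /F esym edge_ofC.
  by move=> x y /andP [].
have [H HP] := fin_all_exists cover.
have [h hP] := fin_all_exists (fun i => (HP i).2).
apply: (distinguishing_product phiD (h := h) phiS eirr) => [i|u v euv].
  by have [[Hsym _ He _] _] := HP i; split=> //; apply: hP.
exists (c (edge_of u v)); have [[_ FH _ _] _] := HP (c (edge_of u v)).
by apply: FH; rewrite /F euv eqxx.
Qed.
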